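(* Let $X$ be a connected bipartite graph with a unique perfect matching. Then for any assignment of nonzero real weights to the edges of $X$, no vertex of the resulting weighted graph is sedentary.
   Context: For a weighted graph with weighted adjacency matrix $A$ (entries equal to edge weights, $0$ for non-adjacent pairs), the transition matrix is $U(t)=e^{itA}$. A vertex $u$ is sedentary if $\inf_{t>0}|U(t)_{u,u}|\ge C$ for some constant $0<C\le1$, and not sedentary if $\inf_{t>0}|U(t)_{u,u}|=0$. *)

From HB Require Import structures.
From mathcomp Require Import all_boot all_order all_algebra.
From mathcomp Require Import Rstruct.
From Stdlib Require Import Reals.
From Coquelicot Require Import Coquelicot.

Set Implicit Arguments.
Unset Strict Implicit.
Unset Printing Implicit Defensive.

Definition simple_graph (n : nat) (e : rel 'I_n) : Prop :=
  symmetric e /\ irreflexive e.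

Definition connected_graph (n : nat) (e : rel 'I_n) : Prop :=
  forall x y : 'I_n, connect e x y.

Definition bipartite (n : nat) (e : rel 'I_n) : Prop :=
  exists c : 'I_n -> bool, forall x y, e x y -> c x != c y.

Definition perfect_matching (n : nat) (e : rel 'I_n) (M : {set {set 'I_n}}) : Prop :=
  (forall S, S \in M -> exists x y, e x y /\ S = [set x; y]) /\
  (forall v : 'I_n, #|[set S in M | v \in S]| = 1%nat).

Definition unique_perfect_matching (n : nat) (e : rel 'I_n) : Prop :=
  exists M, perfect_matching e M /\ forall M', perfect_matching e M' -> M' = M.

Definition wadj (n : nat) (e : rel 'I_n) (w : 'I_n -> 'I_n -> R) : 'M[R]_n :=
  \matrix_(x, y) (if e x y then w x y else R0).

Definition expitA_term (n : nat) (A : 'M[R]_n) (t : R) (x y : 'I_n) (k : nat) : C :=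
  Cmult (pow_n (Cmult Ci (RtoC t)) k)
        (RtoC (Rdiv (GRing.exp A k x y) (INR (Factorial.fact k)))).

(* Transition matrix U(t) = e^{itA}, entry (x,y): sum of the (absolutely
   convergent) complex exponential series, taken componentwise. *)
Definition transition (n : nat) (A : 'M[R]_n) (t : R) (x y : 'I_n) : C :=
  (Series (fun k => Re (expitA_term A t x y k)),
   Series (fun k => Im (expitA_term A t x y k))).

Definition not_sedentary (n : nat) (A : 'M[R]_n) (u : 'I_n) : Prop :=
  Glb_Rbar (fun r => exists t : R, Rlt R0 t /\ r = Cmod (transition A t u u))
  = Finite R0.

(* The weighted adjacency matrix A is symmetric and nonsingular: a permutation s
   moving every vertex along an edge yields, through a proper 2-colouring, the perfect
   matching {{v, s v} | v white}, so by uniqueness the matching involution is the only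
   nonzero term in the Leibniz expansion of det A.  The spectral theorem gives
   (A^k)_uu = sum_j c_j lam_j^k with c_j >= 0, sum_j c_j = 1 and lam_j <> 0, and
   bipartiteness kills the odd moments, so summing the exponential series gives
   U(t)_uu = f(t) := sum_j c_j cos (lam_j t).  Such an f vanishes at some t > 0.
   Otherwise f >= 0 on [0, oo), so G(t) = int_0^t f(s) (1 - cos (mu s)) ds is
   nondecreasing, where mu = lam_j0 for some c_j0 > 0; but expanding the product,
   every frequency occurring in G is nonzero except lam_j0 - mu, whose term
   contributes - c_j0 t / 2, so G(t) tends to -oo. *)

From mathcomp Require Import all_boot all_order all_algebra perm.
From mathcomp Require Import Rstruct.
From mathcomp Require complex.
From Stdlib Require Import Reals Lra Classical.

Import Order.TTheory GRing.Theory Num.Theory.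
From Coquelicot Require Import Coquelicot.

Local Open Scope ring_scope.

Section PerfectMatching.

Context {n : nat} {e : rel 'I_n} {M : {set {set 'I_n}}}.
Hypotheses (e_sym : symmetric e) (e_irr : irreflexive e).
Hypothesis M_perfect : perfect_matching e M.

Lemma matching_block v : exists2 S, S \in M & [set S in M | v \in S] = [set S].
Proof.
have /eqP/cards1P [S defS] := M_perfect.2 v.
by exists S => //; have := set11 S; rewrite -defS inE => /andP [].
Qed.

Lemma matching_partner_uniq {v y y'} :
  y != v -> [set v; y] \in M -> [set v; y'] \in M -> y = y'.
Proof.
move=> yv vyM vy'M; have [S _ defS] := matching_block v.
have block_eq T : T \in M -> v \in T -> T = S.
  by move=> TM vT; apply/set1P; rewrite -defS inE TM.
have : y \in [set v; y'].
  by rewrite (block_eq _ vy'M (set21 _ _)) -(block_eq _ vyM (set21 _ _)) set22.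
by case/set2P => // yv'; rewrite yv' eqxx in yv.
Qed.

Definition mate v := odflt v [pick y | e v y && ([set v; y] \in M)].

Lemma mateP v : e v (mate v) /\ [set v; mate v] \in M.
Proof.
rewrite /mate; case: pickP => [y /andP [] //| no_mate].
have [S SM /setP /(_ S)] := matching_block v.
rewrite !inE SM eqxx /= => vS.
have [x [y [exy defS]]] := M_perfect.1 S SM.
move: vS; rewrite defS => /set2P [vx|vy]; subst v.
  by have := no_mate y; rewrite exy -defS SM.
by have := no_mate x; rewrite e_sym exy setUC -defS SM.
Qed.

Lemma mateK : involutive mate.
Proof.
move=> v; have [ev vM] := mateP v; have [_ vvM] := mateP (mate v).
apply: esym (matching_partner_uniq _ _ vvM); last by rewrite setUC.
by apply: contraTneq ev => <-; rewrite e_irr.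
Qed.

Lemma edge_perm_matching {col : 'I_n -> bool} {s : {perm 'I_n}} :
  (forall x y, e x y -> col x != col y) -> (forall i, e i (s i)) ->
  perfect_matching e [set [set i; s i] | i : 'I_n & col i].
Proof.
move=> col_proper s_edge; split=> [_ /imsetP [i _ ->]|v]; first by exists i, (s i).
have col_s i : col (s i) = ~~ col i.
  by have := col_proper _ _ (s_edge i); case: (col i); case: (col (s i)).
apply/eqP/cards1P; exists (if col v then [set v; s v] else [set (s^-1)%g v; v]).
apply/setP => S; rewrite !inE; apply/andP/eqP.
  move=> [/imsetP [i] /[!inE] ci -> /set2P [->|vsi]].
  - by rewrite ci.
  - by rewrite vsi col_s ci permK.
move=> ->; case: ifP => cv; split; rewrite ?set21 ?set22 //.
  by apply: imset_f; rewrite inE.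
rewrite -{2}(permKV s v); apply: imset_f.
by rewrite inE -[col _]negbK -col_s permKV cv.
Qed.

Hypothesis M_unique : forall M', perfect_matching e M' -> M' = M.

Lemma edge_perm_mate {col : 'I_n -> bool} {s : {perm 'I_n}} :
  (forall x y, e x y -> col x != col y) -> (forall i, e i (s i)) -> s =1 mate.
Proof.
move=> col_proper s_edge v.
wlog cv : col col_proper / col v => [wlog_cv|].
  case cv: (col v); first exact: (wlog_cv col).
  apply: (wlog_cv (negb \o col)); last by rewrite /= cv.
  by move=> x y /col_proper /=; case: (col x); case: (col y).
have vsM : [set v; s v] \in M.
  by rewrite -(M_unique _ (edge_perm_matching col_proper s_edge)); apply: imset_f; rewrite inE.
have [_ vmM] := mateP v.
by apply: (matching_partner_uniq _ vsM vmM); apply: contraTneq (s_edge v) => ->; rewrite e_irr.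
Qed.

End PerfectMatching.

Lemma det_unique_matching_neq0 {F : idomainType} {n} {e : rel 'I_n} (A : 'M[F]_n) :
  simple_graph e -> bipartite e -> unique_perfect_matching e ->
  (forall x y, (A x y != 0) = e x y) -> \det A != 0.
Proof.
move=> [e_sym e_irr] [col col_proper] [M [M_perfect M_unique]] A_supp.
pose s := perm (can_inj (mateK e_sym e_irr M_perfect)).
rewrite /determinant (bigD1 s) //= [X in _ + X]big1 ?addr0 => [|t t_neq_s].
  rewrite mulf_neq0 ?signr_eq0 //; apply/prodf_neq0 => i _.
  by rewrite A_supp permE; case: (mateP e_sym M_perfect i).
have [/forallP t_edge|/forallPn [i]] := boolP [forall i, e i (t i)].
  case/eqP: t_neq_s; apply/permP => v.
  by rewrite permE (edge_perm_mate e_sym e_irr M_perfect M_unique col_proper t_edge).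
by rewrite -A_supp negbK => /eqP Ai0; rewrite (bigD1 i) //= Ai0 mul0r mulr0.
Qed.

Lemma wadj_neq0 {n} {e : rel 'I_n} {w : 'I_n -> 'I_n -> R} :
  (forall x y, e x y -> w x y <> 0) -> forall x y, (wadj e w x y != 0) = e x y.
Proof. by move=> w_neq0 x y; rewrite mxE; case: ifP => [/w_neq0 /eqP|_]; rewrite ?eqxx. Qed.

Lemma tr_wadj {n} {e : rel 'I_n} {w : 'I_n -> 'I_n -> R} :
  symmetric e -> (forall x y, e x y -> w x y = w y x) -> (wadj e w)^T = wadj e w.
Proof.
move=> e_sym w_sym; apply/matrixP => x y; rewrite !mxE e_sym.
by case: ifP => // /w_sym.
Qed.

Lemma bipartite_expmx_odd {F : numDomainType} {n} (A : 'M[F]_n) (col : 'I_n -> bool) :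
  (forall x y, A x y != 0 -> col x != col y) ->
  forall u k, odd k -> (A ^+ k) u u = 0.
Proof.
move=> A_bip u k k_odd.
pose D : 'M[F]_n := diag_mx (\row_i (-1) ^+ col i).
have DE (B : 'M[F]_n) x y : (D *m B *m D) x y = (-1) ^+ col x * B x y * (-1) ^+ col y.
  by rewrite mul_mx_diag mul_diag_mx !mxE.
have DD : D *m D = 1%:M.
  by apply/matrixP => x y; rewrite mulmx_diag !mxE -expr2 sqrr_sign.
have DAD : D *m A *m D = - A.
  apply/matrixP => x y; rewrite DE !mxE.
  have [->|/A_bip] := eqVneq (A x y) 0; first by rewrite mulr0 mul0r oppr0.
  by case: (col x); case: (col y); rewrite //= ?expr1 ?expr0 ?mulN1r ?mulrN1 ?mul1r ?mulr1.
have DAkD m : D *m A ^+ m *m D = (- A) ^+ m.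
  elim: m => [|m IHm]; first by rewrite !expr0 mulmx1.
  by rewrite !exprSr -IHm -DAD -!mulmxE !mulmxA -[_ *m D *m D]mulmxA DD mulmx1.
have /matrixP /(_ u u) : D *m A ^+ k *m D = - A ^+ k.
  by rewrite DAkD exprNn -signr_odd k_odd mulN1r.
rewrite DE mxE mulrC mulrA -expr2 sqrr_sign mul1r => /eqP.
by rewrite -subr_eq0 opprK -mulr2n mulrn_eq0 => /eqP.
Qed.

Lemma conj_expmx (F : comUnitRingType) n (P B : 'M[F]_n) k : P \in unitmx ->
  (invmx P *m B *m P) ^+ k = invmx P *m B ^+ k *m P.
Proof.
move=> P_unit; elim: k => [|k IHk]; first by rewrite !expr0 mulmx1 mulVmx.
by rewrite !exprSr IHk -!mulmxE !mulmxA mulmxK.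
Qed.

Lemma diag_mx_exp (F : pzSemiRingType) n (d : 'rV[F]_n) k :
  diag_mx d ^+ k = diag_mx (\row_j d 0 j ^+ k).
Proof.
elim: k => [|k IHk].
  by apply/matrixP => i j; rewrite !mxE expr0.
by rewrite exprSr IHk -mulmxE mulmx_diag; congr diag_mx; apply/rowP => j; rewrite !mxE exprSr.
Qed.

Lemma normalmx_expmx_diag (C : numClosedFieldType) n (A : 'M[C]_n) k u : A \is normalmx ->
  (A ^+ k) u u = \sum_j `|spectralmx A j u| ^+ 2 * spectral_diag A 0 j ^+ k.
Proof.
move=> /orthomx_spectralP {1}->.
rewrite conj_expmx ?spectral_unit // diag_mx_exp invmx_unitary ?spectral_unitarymx //.
by rewrite mxE; apply: eq_bigr => j _; rewrite mul_mx_diag !mxE mulrAC normCKC.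
Qed.

Lemma det_normalmx (C : numClosedFieldType) n (A : 'M[C]_n) : A \is normalmx ->
  \det A = \prod_j spectral_diag A 0 j.
Proof.
move=> /orthomx_spectralP {1}->; have := spectral_unit A.
rewrite unitmxE unitfE => detP_neq0.
by rewrite !det_mulmx det_diag det_inv mulrAC mulVf ?mul1r.
Qed.

Section RealSymmetric.
Import complex.
Context {F : rcfType}.

Lemma symmetric_expmx_diag {n} (A : 'M[F]_n) u : A^T = A ->
  exists c lam : 'I_n -> F, [/\ forall j, 0 <= c j, \det A = \prod_j lam j
    & forall k, (A ^+ k) u u = \sum_j c j * lam j ^+ k].
Proof.
move=> A_sym; pose Ac := map_mx (real_complex F) A.
have Ac_herm : Ac \is hermsymmx.
  apply/is_hermitianmxP; rewrite expr0 scale1r; apply/matrixP => i j.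
  by rewrite !mxE -{1}A_sym mxE conj_Creal // complex_real.
have Ac_normal := hermitian_normalmx Ac_herm.
have d_real j : spectral_diag Ac 0 j \is Num.real.
  exact: mxOverP (hermitian_spectral_diag_real Ac_herm) 0 j.
have c_real j : `|spectralmx Ac j u| ^+ 2 \is Num.real by rewrite realX ?normr_real.
exists (fun j => Re (`|spectralmx Ac j u| ^+ 2)), (fun j => Re (spectral_diag Ac 0 j)).
split=> [j||k]; first by rewrite -ler0c (RRe_real (c_real j)) exprn_ge0.
  apply: complexI; rewrite -det_map_mx det_normalmx // rmorph_prod.
  by apply: eq_bigr => j _; apply/esym/RRe_real.
have AcX : (Ac ^+ k) u u = real_complex F ((A ^+ k) u u).
  by rewrite -rmorphXn mxE.
apply: complexI; rewrite -AcX normalmx_expmx_diag // rmorph_sum.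
by apply: eq_bigr => j _; rewrite rmorphM rmorphXn; congr (_ * _ ^+ _); apply/esym/RRe_real.
Qed.
End RealSymmetric.

Local Open Scope R_scope.

(* Real finite sums whose summand is read in [R_scope] rather than [ring_scope]. *)
Notation "\sum_ ( i : t ) F" := (\big[GRing.add/GRing.zero]_(i : t) F) : R_scope.

Lemma Rmult_suml (I : finType) (F : I -> R) a :
  (\sum_(i : I) F i) * a = \sum_(i : I) F i * a.
Proof. exact: mulr_suml. Qed.

Lemma is_derive_sum (I : finType) (F : I -> R -> R) (dF : I -> R) t :
  (forall i, is_derive (F i) t (dF i)) ->
  is_derive (fun x => \sum_(i : I) F i x) t (\sum_(i : I) dF i).
Proof.
move=> F_derive; elim: (index_enum I) => [|i s IHs].
  by apply: (is_derive_ext (fun _ => 0)) => [x|]; rewrite big_nil //; apply: is_derive_const.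
apply: (is_derive_ext (fun x => F i x + \big[GRing.add/GRing.zero]_(j <- s) F j x)) => [x|].
  by rewrite big_cons.
by rewrite big_cons; apply: is_derive_plus.
Qed.

Lemma is_series_0 : is_series (fun _ : nat => 0) 0.
Proof.
apply: (filterlim_ext (fun _ => 0)); last exact: filterlim_const.
by move=> k; rewrite sum_n_const Rmult_0_r.
Qed.

Lemma is_series_sum (I : finType) (a : I -> nat -> R) (l : I -> R) :
  (forall i, is_series (a i) (l i)) ->
  is_series (fun k => \sum_(i : I) a i k) (\sum_(i : I) l i).
Proof.
move=> a_series; elim: (index_enum I) => [|i s IHs].
  by rewrite big_nil; apply: is_series_ext is_series_0 => k; rewrite big_nil.
rewrite big_cons; apply: is_series_ext (is_series_plus _ _ _ _ (a_series i) IHs) => k.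
by rewrite big_cons.
Qed.

Definition cos_coef (k : nat) : R :=
  if odd k then 0 else (-1) ^ k./2 / INR (Factorial.fact k).

Lemma cos_series x : is_series (fun k => cos_coef k * x ^ k) (cos x).
Proof.
have double k : (2 * k)%coq_nat = k.*2 by rewrite multE mul2n.
have even_part : is_pseries (fun k => cos_coef (2 * k)%coq_nat) (x ^ 2) (cos x).
  rewrite /cos; case: (exist_cos (Rsqr x)) => l cos_l.
  apply: is_series_ext (proj2 (is_series_Reals _ _) cos_l) => k.
  rewrite double /cos_coef odd_double doubleK -double.
  by rewrite /scal /= /mult /= pow_n_pow /Rsqr Rmult_1_r Rmult_comm.
have odd_part : is_pseries (fun k => cos_coef (2 * k + 1)%coq_nat) (x ^ 2) 0.
  apply: is_series_ext is_series_0 => k.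
  by rewrite mul2n plusE addn1 /cos_coef /= odd_double /scal /= /mult /= Rmult_0_r.
have := is_pseries_odd_even _ _ _ _ even_part odd_part.
rewrite Rmult_0_r Rplus_0_r; apply: is_series_ext => k.
by rewrite /scal /= /mult /= pow_n_pow Rmult_comm.
Qed.

Definition cos_prim (b t : R) : R := if Req_EM_T b 0 then t else sin (b * t) / b.

Lemma is_derive_cos_prim b t : is_derive (cos_prim b) t (cos (b * t)).
Proof.
rewrite /cos_prim; case: Req_EM_T => [b0|b_neq0] /=.
  by rewrite b0 Rmult_0_l cos_0; apply: is_derive_id.
by auto_derive; [|field].
Qed.

Lemma cos_prim_at0 b : cos_prim b 0 = 0.
Proof. by rewrite /cos_prim; case: Req_EM_T => //= _; rewrite Rmult_0_r sin_0 /Rdiv Rmult_0_l. Qed.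

Lemma cos_prim0 t : cos_prim 0 t = t.
Proof. by rewrite /cos_prim; case: Req_EM_T. Qed.

Lemma cos_prim_abs_le b t : b <> 0 -> Rabs (cos_prim b t) <= / Rabs b.
Proof.
move=> b_neq0; rewrite /cos_prim; case: Req_EM_T => //= _.
rewrite /Rdiv Rabs_mult Rabs_inv -{2}(Rmult_1_l (/ Rabs b)).
apply: Rmult_le_compat_r; first exact/Rlt_le/Rinv_0_lt_compat/Rabs_pos_lt.
exact/Rabs_le/SIN_bound.
Qed.

Lemma cos_prim_le b t : b <> 0 -> cos_prim b t <= / Rabs b.
Proof. by move=> /(cos_prim_abs_le b t); apply: Rle_trans (Rle_abs _). Qed.

(* For [b = 0] the bound reads [0 <= t], as [/ 0 = 0] in Rocq. *)
Lemma cos_prim_ge b t : 0 <= t -> - / Rabs b <= cos_prim b t.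
Proof.
move=> t_ge0; case: (Req_EM_T b 0) => [->|/(cos_prim_abs_le b t) /Rabs_le_between [] //].
by rewrite cos_prim0 Rabs_R0 Rinv_0 Ropp_0.
Qed.

Definition beat_prim (b mu t : R) : R :=
  cos_prim b t - cos_prim (b - mu) t / 2 - cos_prim (b + mu) t / 2.

Definition beat_prim_bound (b mu : R) : R :=
  / Rabs b + / Rabs (b - mu) / 2 + / Rabs (b + mu) / 2.

Lemma is_derive_beat_prim b mu t :
  is_derive (beat_prim b mu) t (cos (b * t) * (1 - cos (mu * t))).
Proof.
have -> : cos (b * t) * (1 - cos (mu * t)) =
    cos (b * t) - cos ((b - mu) * t) / 2 - cos ((b + mu) * t) / 2.
  rewrite Rmult_minus_distr_r Rmult_plus_distr_r cos_minus cos_plus; field.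
apply: is_derive_minus; first apply: is_derive_minus.
- exact: is_derive_cos_prim.
- exact/is_derive_scal_l/is_derive_cos_prim.
- exact/is_derive_scal_l/is_derive_cos_prim.
Qed.

Lemma beat_prim_at0 b mu : beat_prim b mu 0 = 0.
Proof. by rewrite /beat_prim !cos_prim_at0; field. Qed.

Lemma beat_prim_le b mu t : b <> 0 -> 0 <= t -> beat_prim b mu t <= beat_prim_bound b mu.
Proof.
move=> b_neq0 t_ge0; rewrite /beat_prim /beat_prim_bound.
have := cos_prim_le b t b_neq0.
have := cos_prim_ge (b - mu) t t_ge0; have := cos_prim_ge (b + mu) t t_ge0.
lra.
Qed.

Lemma beat_prim_diag_le mu t : mu <> 0 -> 0 <= t ->
  beat_prim mu mu t <= beat_prim_bound mu mu - t / 2.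
Proof.
move=> mu_neq0 t_ge0.
rewrite /beat_prim /beat_prim_bound Rminus_diag cos_prim0 Rabs_R0 Rinv_0.
have := cos_prim_le mu t mu_neq0; have := cos_prim_ge (mu + mu) t t_ge0.
lra.
Qed.

Lemma is_derive_ge0_le (G dG : R -> R) a b :
  (forall t, is_derive G t (dG t)) -> (forall t, a <= t <= b -> 0 <= dG t) ->
  a <= b -> G a <= G b.
Proof.
move=> G_derive dG_ge0 ab.
have G_cont t : continuity_pt G t.
  by apply/continuity_pt_filterlim/ex_derive_continuous; exists (dG t).
have [t []] := MVT_gen G a b dG (fun t _ => G_derive t) (fun t _ => G_cont t).
rewrite Rmin_left // Rmax_right // => t_ab G_ab.
have := dG_ge0 t t_ab; nra.
Qed.

Section CosineSum.
Variables (I : finType) (c lam : I -> R).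
Hypotheses (c_ge0 : forall j, 0 <= c j) (lam_neq0 : forall j, lam j <> 0).

Lemma sum_beat_prim_le j0 t : 0 <= t ->
  \sum_(j : I) c j * beat_prim (lam j) (lam j0) t
  <= \sum_(j : I) c j * beat_prim_bound (lam j) (lam j0) - c j0 * t / 2.
Proof.
move=> t_ge0; have head : c j0 * beat_prim (lam j0) (lam j0) t
    <= c j0 * beat_prim_bound (lam j0) (lam j0) - c j0 * t / 2.
  by have := beat_prim_diag_le (lam j0) t (lam_neq0 j0) t_ge0; have := c_ge0 j0; nra.
rewrite (bigD1 j0) // [X in _ <= X - _](bigD1 j0) //= RminusE addrAC.
apply/RleP/lerD; first exact/RleP.
apply: ler_sum => j _.
by apply/RleP/Rmult_le_compat_l => //; apply: beat_prim_le.
Qed.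

Lemma exists_cos_sum_lt0 j0 : 0 < c j0 ->
  exists t, 0 <= t /\ \sum_(j : I) c j * cos (lam j * t) < 0.
Proof.
move=> cj0_gt0; apply: NNPP => no_neg.
set mu := lam j0; set B := \sum_(j : I) c j * beat_prim_bound (lam j) mu.
pose G t := \sum_(j : I) c j * beat_prim (lam j) mu t.
have G_derive t : is_derive G t
    ((\sum_(j : I) c j * cos (lam j * t)) * (1 - cos (mu * t))).
  rewrite Rmult_suml; apply: is_derive_sum => j.
  rewrite Rmult_assoc; exact/is_derive_scal/is_derive_beat_prim.
have G_ge0 T : 0 <= T -> 0 <= G T.
  move=> T_ge0; have -> : 0 = G 0 by rewrite /G big1 // => j _; rewrite beat_prim_at0 Rmult_0_r.
  apply: (is_derive_ge0_le _ _ _ _ G_derive) => // t [t_ge0 _].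
  apply: Rmult_le_pos; first by apply: Rnot_lt_le => f_neg; apply: no_neg; exists t.
  by have := COS_bound (mu * t); lra.
pose T := 2 * (Rabs B + 1) / c j0.
have T_ge0 : 0 <= T by apply/Rlt_le/Rdiv_lt_0_compat => //; have := Rabs_pos B; lra.
have cT : c j0 * T / 2 = Rabs B + 1 by rewrite /T; field; lra.
have := sum_beat_prim_le j0 T T_ge0; have := G_ge0 T T_ge0; have := Rle_abs B.
rewrite /G -/mu -/B cT; lra.
Qed.

Lemma exists_cos_sum_root : 0 < \sum_(j : I) c j ->
  exists t, 0 < t /\ \sum_(j : I) c j * cos (lam j * t) = 0.
Proof.
move=> c_sum_gt0; pose f t := \sum_(j : I) c j * cos (lam j * t).
have [j0 cj0_gt0] : exists j0, 0 < c j0.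
  apply: NNPP => /not_ex_all_not c_le0; apply: (Rlt_irrefl 0).
  rewrite [X in _ < X]big1 // in c_sum_gt0 => j _.
  exact/Rle_antisym/c_ge0/Rnot_lt_le/c_le0.
have [t [t_ge0 ft_neg]] := exists_cos_sum_lt0 j0 cj0_gt0.
have f_cont : continuity f.
  apply: (@continuity_sum I (fun j t => c j * cos (lam j * t)) predT) => j _ x.
  by apply/continuity_pt_filterlim/ex_derive_continuous; auto_derive.
have f0 : f 0 = \sum_(j : I) c j.
  by apply: eq_bigr => j _; rewrite Rmult_0_r cos_0 Rmult_1_r.
have sign_change : f 0 * f t <= 0 by rewrite f0 /f; nra.
have [z [[z_ge0 _] fz0]] := IVT_cor f 0 t f_cont t_ge0 sign_change.
exists z; split => //; case: z_ge0 => // z0.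
by move: fz0; rewrite -z0 f0; lra.
Qed.
End CosineSum.

Lemma pow_i_mul t k : pow_n (Cmult Ci (RtoC t)) k =
  if odd k then (0, (-1) ^ k./2 * t ^ k) else ((-1) ^ k./2 * t ^ k, 0).
Proof.
elim: k => [|k IHk]; first by apply: injective_projections => /=; ring.
rewrite /= IHk /mult /= uphalf_half.
by case: (odd k); rewrite ?add0n ?add1n; apply: injective_projections => /=; ring.
Qed.

Lemma transition_diag_cos n (A : 'M[R]_n) u (c lam : 'I_n -> R) t :
  (forall k, odd k -> GRing.exp A k u u = 0) ->
  (forall k, GRing.exp A k u u = \sum_(j : 'I_n) c j * lam j ^ k) ->
  transition A t u u = RtoC (\sum_(j : 'I_n) c j * cos (lam j * t)).
Proof.
move=> odd_moments moments; rewrite /transition /RtoC.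
congr pair; apply: is_series_unique; last first.
  apply: is_series_ext is_series_0 => k; rewrite /expitA_term pow_i_mul /=.
  by case: ifP => [/odd_moments ->|_] /=; rewrite /Rdiv; ring.
have cos_terms j := is_series_scal_l (c j) _ _ (cos_series (lam j * t)).
apply: is_series_ext (is_series_sum _ _ _ cos_terms) => k.
rewrite /expitA_term pow_i_mul /cos_coef /scal /= /mult /=.
case: (odd k) => /=.
  by rewrite Rmult_0_l Rmult_0_r Rminus_0_r big1 // => j _; rewrite Rmult_0_l Rmult_0_r.
rewrite /Rdiv (eq_bigr (fun j =>
  c j * lam j ^ k * ((-1) ^ k./2 * t ^ k * / INR (Factorial.fact k)))) => [|j _].
  (* [ring] only accepts atoms whose type is syntactically [R]. *)
  by rewrite -Rmult_suml -moments; set m := GRing.exp A k u u; ring.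
by rewrite Rpow_mult_distr; ring.
Qed.

Lemma not_sedentary_of_root n (A : 'M[R]_n) u :
  (exists t, 0 < t /\ Cmod (transition A t u u) = 0) -> not_sedentary A u.
Proof.
move=> [t [t_gt0 Ut0]]; apply: is_glb_Rbar_unique; split=> [_ [s [_ ->]]|b b_lb].
  exact: Cmod_ge_0.
by apply: b_lb; exists t.
Qed.

Lemma nonsingular_bipartite_not_sedentary {n} (A : 'M[R]_n) (col : 'I_n -> bool) u :
  A^T = A -> \det A != 0 -> (forall x y, A x y != 0 -> col x != col y) ->
  not_sedentary A u.
Proof.
move=> A_sym detA_neq0 A_bip.
have [c [lam [c_ge0 detA moments]]] := symmetric_expmx_diag A u A_sym.
have lam_neq0 j : lam j <> 0.
  by apply/eqP; move: detA_neq0; rewrite detA => /prodf_neq0; apply.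
have c_sum_gt0 : 0 < \sum_(j : 'I_n) c j.
  have -> : \sum_(j : 'I_n) c j = (A ^+ 0) u u.
    by rewrite moments; apply: eq_bigr => j _; rewrite expr0 mulr1.
  by rewrite expr0 mxE eqxx; exact: Rlt_0_1.
have [t [t_gt0 cos_sum0]] :
    exists t, 0 < t /\ \sum_(j : 'I_n) c j * cos (lam j * t) = 0.
  by apply: exists_cos_sum_root => // j; apply/RleP.
apply: not_sedentary_of_root; exists t; split=> //.
rewrite (transition_diag_cos n A u c lam t (bipartite_expmx_odd A col A_bip u)).
  by rewrite cos_sum0 Cmod_R Rabs_R0.
by move=> k; rewrite moments; apply: eq_bigr => j _; rewrite RpowE.
Qed.

Theorem theorem20 (n : nat) (e : rel 'I_n) :
  simple_graph e -> connected_graph e -> bipartite e ->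
  unique_perfect_matching e ->
  forall w : 'I_n -> 'I_n -> R,
    (forall x y, e x y -> w x y = w y x) ->
    (forall x y, e x y -> w x y <> R0) ->
    forall u : 'I_n, not_sedentary (wadj e w) u.
Proof.
move=> e_simple _ e_bip e_upm w w_sym w_neq0 u.
have A_supp := wadj_neq0 w_neq0.
have [col col_proper] := e_bip.
apply: (nonsingular_bipartite_not_sedentary _ col).
- exact: tr_wadj e_simple.1 w_sym.
- exact: det_unique_matching_neq0 e_simple e_bip e_upm A_supp.
- by move=> x y; rewrite A_supp; apply: col_proper.
Qed.
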